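(* Let $p_1,\dots,p_s$ be distinct primes, $m_1,\dots,m_s\ge1$, and let $\Gamma$ be a multi-sorted constraint language over $\mathcal D=\{\mathbb Z_{p_1^{m_1}},\dots,\mathbb Z_{p_s^{m_s}}\}$ invariant with respect to the affine operation of $\mathbb Z_{p_1^{m_1}},\dots,\mathbb Z_{p_s^{m_s}}$. Let $\mathcal P$ be an instance of $\textsc{MCSP}(\Gamma)$. Then $\mathcal P$ is equivalent (has the same set of solutions) to an instance $\mathcal P'$ such that for every constraint $\langle\mathbf s,R\rangle$ of $\mathcal P'$ all variables in $\mathbf s$ are of the same sort. Moreover, $\mathcal P'$ has the same set of variables $X$ as $\mathcal P$, and every $x\in X$ has the same sort in $\mathcal P$ and $\mathcal P'$.
   Context: A multi-sorted relation with signature $(t_1,\dots,t_n)$ is a subset of $D_{t_1}\times\dots\times D_{t_n}$. An instance of $\textsc{MCSP}(\Gamma)$ is $(X,\mathcal D,\delta,\mathcal C)$ with $\delta$ assigning each variable a sort (domain) and constraints $\langle(x_1,\dots,x_m),R\rangle$ with $R\in\Gamma$ of signature $(\delta(x_1),\dots,\delta(x_m))$; solutions are assignments $\varphi(x)\in D_{\delta(x)}$ satisfying all constraints. Invariance under the affine operation: for all $\mathbf a,\mathbf b,\mathbf c\in R$, the coordinatewise $\mathbf a-\mathbf b+\mathbf c$ (in the respective groups) is in $R$. *)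

From Stdlib Require List.
From HB Require Import structures.
From mathcomp Require Import all_boot all_order all_algebra.
Set Implicit Arguments. Unset Strict Implicit. Unset Printing Implicit Defensive.
Import GRing.Theory.
Local Open Scope ring_scope.

Definition ZD (s : nat) (p m : 'I_s -> nat) (i : 'I_s) : zmodType :=
  'Z_(p i ^ m i).

(* A multi-sorted relation: arity n, signature (t_1,...,t_n), and a subset
   of D_{t_1} x ... x D_{t_n} (tuples as dependent functions on 'I_n). *)
Record mrel (s : nat) (D : 'I_s -> Type) := MRel {
  mr_ar : nat;
  mr_sig : 'I_mr_ar -> 'I_s;
  mr_rel : (forall k : 'I_mr_ar, D (mr_sig k)) -> Prop }.

Definition affine_inv (s : nat) (D : 'I_s -> zmodType) (R : mrel D) : Prop :=
  forall a b c : (forall k, D (@mr_sig s D R k)),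
    @mr_rel s D R a -> @mr_rel s D R b -> @mr_rel s D R c ->
    @mr_rel s D R (fun k => a k - b k + c k).

Arguments mr_ar {s D}.
Arguments mr_sig {s D}.
Arguments mr_rel {s D}.

Record constraint (s : nat) (D : 'I_s -> Type) (X : Type) (delta : X -> 'I_s) :=
  Constraint {
  c_rel : mrel D;
  c_scope : 'I_(mr_ar c_rel) -> X;
  c_ok : forall k, delta (c_scope k) = mr_sig c_rel k }.

Arguments c_rel {s D X delta}.
Arguments c_scope {s D X delta}.
Arguments c_ok {s D X delta}.

Definition satisfies (s : nat) (D : 'I_s -> Type) (X : Type) (delta : X -> 'I_s)
  (phi : forall x : X, D (delta x)) (c : constraint D delta) : Prop :=
  mr_rel (c_rel c)
    (fun k => eq_rect _ D (phi (c_scope c k)) _ (c_ok c k)).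

Definition is_solution (s : nat) (D : 'I_s -> Type) (X : Type) (delta : X -> 'I_s)
  (C : seq (constraint D delta)) (phi : forall x : X, D (delta x)) : Prop :=
  forall c, List.In c C -> satisfies phi c.

Definition single_sorted (s : nat) (D : 'I_s -> Type) (X : Type)
  (delta : X -> 'I_s) (c : constraint D delta) : Prop :=
  forall k l, delta (c_scope c k) = delta (c_scope c l).

(** The solution set of an instance whose relations are affine-invariant is
    closed under [a - b + c], i.e. it is a coset of a subgroup of
    [prod_x Z_(p_(delta x)^(m_(delta x)))].  Since the moduli are pairwise
    coprime, the Chinese remainder theorem provides integers [e_i] that act as
    the identity on the sort [i] and as zero on every other sort; multiplying
    by [e_i] inside the subgroup shows that the coset is the product of its
    projections onto the sorts.  Hence replacing [C] by one constraint per sort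
    (the projection of the solution set onto the variables of that sort),
    together with the projection onto no variables at all, which records
    whether [C] is satisfiable (needed when there are no sorts), does not
    change the solutions. *)

From Stdlib Require List.
From Stdlib Require Import FunctionalExtensionality.
From mathcomp Require Import all_boot all_order all_algebra.
Set Implicit Arguments. Unset Strict Implicit. Unset Printing Implicit Defensive.
Import GRing.Theory.
Local Open Scope ring_scope.

Lemma In_mem (T : eqType) (x : T) (r : seq T) : x \in r -> List.In x r.
Proof. by elim: r => //= y r IHr; rewrite in_cons => /predU1P [->|/IHr]; tauto. Qed.

Lemma eq_rect_affine (I : Type) (D : I -> zmodType) (i j : I) (e : i = j)
    (a b c : D i) :
  eq_rect i D (a - b + c) j e = eq_rect i D a j e - eq_rect i D b j e + eq_rect i D c j e.
Proof. by case: j / e. Qed.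

Lemma mulrn_modn (V : zmodType) (N : nat) (x : V) n :
  x *+ N = 0 -> x *+ n = x *+ (n %% N).
Proof. by move=> xN; rewrite {1}(divn_eq n N) mulrnDr mulnC mulrnA xN mul0rn add0r. Qed.

Lemma Zp_mulrn_modulus (N : nat) (x : 'Z_N) : (1 < N)%N -> x *+ N = 0.
Proof. by move=> N_gt1; rewrite -mulr_natr pchar_Zp ?mulr0. Qed.

Lemma crt_idempotent (s : nat) (N : 'I_s -> nat)
    (coprimeN : forall i j, i != j -> coprime (N i) (N j)) (i : 'I_s) :
  exists e : nat, forall j, e = (j == i) %[mod N j].
Proof.
pose M := (\prod_(j < s | j != i) N j)%N.
have coNM : coprime (N i) M.
  rewrite /M; elim/big_ind: _ => [|u v|j ji]; first exact: coprimen1.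
    by rewrite coprimeMr => -> ->.
  by rewrite coprimeN // eq_sym.
exists (chinese (N i) M 1 0) => j.
have [->|ji] := eqVneq j i; first by rewrite chinese_modl.
rewrite mod0n; apply/eqP; apply: dvdn_trans (_ : N j %| M)%N _.
  by rewrite /M (bigD1 j) //= dvdn_mulr.
by rewrite /dvdn chinese_modr // mod0n.
Qed.

Section AffineSets.

Variables (T : Type) (V : T -> zmodType).

Definition affine_closed (S : (forall x, V x) -> Prop) :=
  forall a b c, S a -> S b -> S c -> S (fun x => a x - b x + c x).

Variables (S : (forall x, V x) -> Prop) (S_affine : affine_closed S).
Variables (a : forall x, V x) (Sa : S a).

Lemma eq_S (f g : forall x, V x) : (forall x, f x = g x) -> S f -> S g.
Proof. by move=> /(functional_extensionality_dep f g) ->. Qed.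

Lemma affine_shift_add (f g : forall x, V x) :
  S (fun x => f x + a x) -> S (fun x => g x + a x) ->
  S (fun x => f x + g x + a x).
Proof. by move=> Sf Sg; apply: eq_S (S_affine Sf Sa Sg) => x; rewrite addrK addrA. Qed.

Lemma affine_shift_muln (f : forall x, V x) n :
  S (fun x => f x + a x) -> S (fun x => f x *+ n + a x).
Proof.
move=> Sf; elim: n => [|n IHn].
  by apply: eq_S Sa => x; rewrite mulr0n add0r.
by apply: eq_S (affine_shift_add Sf IHn) => x; rewrite mulrS.
Qed.

End AffineSets.

Section SortDecomposition.

Variables (s : nat) (D : 'I_s -> zmodType) (N : 'I_s -> nat).
Hypothesis coprimeN : forall i j, i != j -> coprime (N i) (N j).
Hypothesis D_exponent : forall i (y : D i), y *+ N i = 0.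
Variables (X : Type) (delta : X -> 'I_s).

Lemma affine_closed_sort_decomposition (S : (forall x, D (delta x)) -> Prop)
    (phi : forall x, D (delta x)) :
  affine_closed S -> (exists a, S a) ->
  (forall i, exists2 psi, S psi & {in [pred x | delta x == i], forall x, psi x = phi x}) ->
  S phi.
Proof.
move=> S_affine [a Sa] Sphi.
pose part i x := if delta x == i then phi x - a x else 0.
have Spart i : S (fun x => part i x + a x).
  have [psi Spsi psi_phi] := Sphi i; have [e eP] := crt_idempotent coprimeN i.
  have Sdiff : S (fun x => (psi x - a x) + a x).
    by apply: eq_S Spsi => x; rewrite subrK.
  apply: eq_S (affine_shift_muln S_affine Sa e Sdiff) => x; congr (_ + _).
  rewrite (mulrn_modn _ (D_exponent _)) eP -mulrn_modn ?D_exponent //.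
  by rewrite /part; case: ifP => [/psi_phi ->|_]; rewrite ?mulr1n ?mulr0n.
have Ssum r : S (fun x => \sum_(i <- r) part i x + a x).
  elim: r => [|i r IHr]; first by apply: eq_S Sa => x; rewrite big_nil add0r.
  by apply: eq_S (affine_shift_add S_affine Sa (Spart i) IHr) => x; rewrite big_cons.
apply: eq_S (Ssum (index_enum 'I_s)) => x.
rewrite (bigD1 (delta x)) //= big1 => [|j]; last by rewrite /part eq_sym => /negbTE ->.
by rewrite /part eqxx addr0 subrK.
Qed.

End SortDecomposition.

Lemma coprime_prime_powers (s : nat) (p m : 'I_s -> nat) :
  (forall i, prime (p i)) -> injective p ->
  forall i j, i != j -> coprime (p i ^ m i) (p j ^ m j).
Proof.
move=> p_prime p_inj i j ij; apply/coprimeXl/coprimeXr.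
by rewrite prime_coprime // dvdn_prime2 // (inj_eq p_inj).
Qed.

Lemma ZD_exponent (s : nat) (p m : 'I_s -> nat) :
  (forall i, prime (p i)) -> (forall i, (0 < m i)%N) ->
  forall i (y : ZD p m i), y *+ (p i ^ m i) = 0.
Proof.
move=> p_prime m_gt0 i y; apply: Zp_mulrn_modulus.
by rewrite -[X in (X < _)%N](expn0 (p i)) ltn_exp2l ?prime_gt1.
Qed.

Section Solutions.

Variables (s : nat) (D : 'I_s -> zmodType) (X : Type) (delta : X -> 'I_s).

Lemma is_solution_affine (C : seq (constraint D delta)) :
  (forall c, List.In c C -> affine_inv (c_rel c)) -> affine_closed (is_solution C).
Proof.
move=> C_affine a b c Ca Cb Cc r Cr.
have := C_affine r Cr _ _ _ (Ca r Cr) (Cb r Cr) (Cc r Cr).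
congr (mr_rel _ _); apply: functional_extensionality_dep => k.
by rewrite eq_rect_affine.
Qed.

End Solutions.

Section ProjectionConstraints.

Variables (s : nat) (D : 'I_s -> Type) (X : finType) (delta : X -> 'I_s).

Definition projection_constraint (S : (forall x, D (delta x)) -> Prop)
    (A : {pred X}) : constraint D delta :=
  @Constraint s D X delta
    (@MRel s D #|A| (fun k => delta (enum_val k))
       (fun t => exists2 psi, S psi & forall k, psi (enum_val k) = t k))
    (fun k => enum_val k) (fun k => erefl).

Lemma satisfies_projection_constraint S A (phi : forall x, D (delta x)) :
  satisfies phi (projection_constraint S A) <->
  exists2 psi, S psi & {in A, forall x, psi x = phi x}.
Proof.
split=> [[psi Spsi psi_phi] | [psi Spsi psi_phi]]; exists psi => //.
  by move=> x Ax; rewrite -[x](enum_rankK_in Ax Ax); exact: psi_phi.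
by move=> k; apply: psi_phi; exact: enum_valP.
Qed.

Lemma single_sorted_projection_constraint S (A : {pred X}) :
  {in A &, forall x y, delta x = delta y} ->
  single_sorted (projection_constraint S A).
Proof. by move=> A_sorted k l; apply: A_sorted; exact: enum_valP. Qed.

End ProjectionConstraints.

Theorem proposition4p5 (s : nat) (p m : 'I_s -> nat)
  (Hp : forall i, prime (p i)) (Hdist : injective p)
  (Hm : forall i, (0 < m i)%N)
  (Gamma : mrel (ZD p m) -> Prop)
  (HGamma : forall R, Gamma R -> affine_inv R)
  (X : finType) (delta : X -> 'I_s)
  (C : seq (constraint (ZD p m) delta))
  (HC : forall c, List.In c C -> Gamma (c_rel c)) :
  exists C' : seq (constraint (ZD p m) delta),
    (forall c, List.In c C' -> single_sorted c) /\
    (forall phi : (forall x : X, ZD p m (delta x)),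
       is_solution C phi <-> is_solution C' phi).
Proof.
pose project := projection_constraint (is_solution C).
pose sort_projections := [seq project [pred x | delta x == i] | i <- enum 'I_s].
exists (project pred0 :: sort_projections).
split=> [c /= [<- | /List.in_map_iff [i [<- _]]] | phi].
- by apply: single_sorted_projection_constraint.
- by apply: single_sorted_projection_constraint => x y /eqP -> /eqP ->.
split=> [Cphi c /= [<- | /List.in_map_iff [i [<- _]]] | C'phi].
- by apply/satisfies_projection_constraint; exists phi.
- by apply/satisfies_projection_constraint; exists phi.
have /satisfies_projection_constraint [a Ca _] := C'phi _ (or_introl erefl).
apply: (affine_closed_sort_decomposition (coprime_prime_powers m Hp Hdist)
          (ZD_exponent Hp Hm)).
- by apply: is_solution_affine => c /HC /HGamma.
- by exists a.
move=> i; have i_sort : List.In (project [pred x | delta x == i]) sort_projections.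
  exact: List.in_map (In_mem (mem_enum _ i)).
exact/satisfies_projection_constraint/C'phi/or_intror.
Qed.
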